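(* Let $r\ge4$, $n\ge1$, and $p\in[0,1/2]$ with $pn$ an integer. Let $K=\frac{2pn+1}{n}$ and define $d=b_r$ if $r\le(1+K)^2/K$, and $d=1+K$ otherwise. For $i\in\{0,\dots,n-1\}$ let $X_i=(x_{j,i})_{j\ge0}$ with $x_{j,i}=d^{\,j+i/n}$. Then each $X_i$ has robustness at most $r$. Moreover, let $T\ge 1+d$, let $l=l(T)$ be the best index at $T$, suppose the predicted answers to the queries $Q_0,\dots,Q_{n-1}$ differ from the true answers in at most $\eta n$ positions where $0\le\eta\le p$, let $N$ be the number of ''no'' answers in the prediction, and let $m=(N-1-pn)\bmod n\in\{0,\dots,n-1\}$ be the index chosen by the scheme $\mathrm{Robust}_p$. Then $$\frac{T}{\ell(X_m,T)}\ \le\ \frac{d^{1+\frac1n+2p}}{d-1}.$$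
   Context: A schedule is an increasing sequence $(x_j)_{j\ge0}$ of positive reals (contract lengths), executed in order, so the $j$-th contract completes at time $S_j=\sum_{k=0}^j x_k$. For $T>0$, $\ell(X,T)=\max\{x_j: S_j\le T\}$ ($0$ if none). The robustness of $X$ is $\sup_{j\ge1}S_j/x_{j-1}$. For $r\ge4$, $b_r=\frac{r+\sqrt{r^2-4r}}{2}$. For an interruption $T$, the best index $l(T)\in\{0,\dots,n-1\}$ is the index $i$ maximizing $\ell(X_i,T)$ (it is unique since all contract lengths $d^{j+i/n}$ are distinct). The binary prediction consists of answers to $n$ queries $Q_0,\dots,Q_{n-1}$, where $Q_i$ asks ''Is the best index $l(T)$ at most $i-1$, i.e., is the best schedule among $X_0,\dots,X_{i-1}$?''; thus the true answer to $Q_i$ is ''no'' exactly when $i\le l(T)$, and the error-free number of ''no'' answers is $l(T)+1$. The prediction error $\eta\in[0,1]$ is the fraction of the $n$ predicted answers that are wrong. *)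

From Stdlib Require Import Reals Lra Lia ZArith List ClassicalEpsilon.
Open Scope R_scope.

Definition Ssum (x : nat -> R) (j : nat) : R := sum_f_R0 x j.

Definition ell_spec (x : nat -> R) (T v : R) : Prop :=
  (exists j, Ssum x j <= T /\ v = x j /\ (forall k, Ssum x k <= T -> x k <= v))
  \/ ((forall j, T < Ssum x j) /\ v = 0).

Definition ell (x : nat -> R) (T : R) : R := epsilon (inhabits 0) (ell_spec x T).

Definition robustness_le (x : nat -> R) (r : R) : Prop :=
  forall j : nat, (1 <= j)%nat -> Ssum x j / x (j - 1)%nat <= r.

Definition b_r (r : R) : R := (r + sqrt (r ^ 2 - 4 * r)) / 2.

Definition Kval (n : nat) (p : R) : R := (2 * p * INR n + 1) / INR n.

Definition dval (r : R) (n : nat) (p : R) : R :=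
  let K := Kval n p in
  if Rle_dec r ((1 + K) ^ 2 / K) then b_r r else 1 + K.

Definition Xsched (d : R) (n i : nat) : nat -> R :=
  fun j => Rpower d (INR j + INR i / INR n).

(* predicted answers: pred i = true means "no" for query Q_i, i < n.
   The true answer to Q_i is "no" iff i <= l. *)
Definition num_errors (n l : nat) (pred : nat -> bool) : nat :=
  length (filter (fun i => negb (Bool.eqb (pred i) (Nat.leb i l))) (seq 0 n)).

Definition num_no (n : nat) (pred : nat -> bool) : nat :=
  length (filter pred (seq 0 n)).

(* m = (N - 1 - pn) mod n, with pn = k *)
Definition robust_index (n k : nat) (pred : nat -> bool) : nat :=
  Z.to_nat ((Z.of_nat (num_no n pred) - 1 - Z.of_nat k) mod Z.of_nat n)%Z.

From Stdlib Require Import Reals Lra Lia List ClassicalEpsilon FunctionalExtensionality ZArith.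
Open Scope R_scope.

(* Write q = d^(1/n), so that q^n = d > 1 and x_{j,i} = q^(j*n+i): the n
   schedules X_i interleave, and together use every exponent g = j*n+i once.
   1. Robustness: S_j = q^i (d^(j+1) - 1)/(d - 1) < x_{j-1} d^2/(d - 1), and the
      choice of d gives d^2 <= r (d - 1).
   2. Exponents are ordered across schedules: a contract with a smaller
      exponent finishes no later than one with a larger exponent.  Hence, if
      the best contract at T has exponent g, the contract with exponent g+1 is
      not finished by T, which bounds T (d - 1) < q^(g+1+n); and every contract
      with exponent at most max(g, n) is finished (the bound n uses T >= 1+d).
   3. Counting: with at most k = pn wrong answers, the number N of "no"
      answers is within k of l+1, so m = (N-1-k) mod n lies cyclically at most
      2k positions below l; X_m thus finishes a contract of exponent >= g - 2k.
   Combining 2 and 3 gives T / ell(X_m, T) <= q^(n+1+2k)/(d - 1), which is the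
   claimed bound since q^(n+1+2k) = d^(1+1/n+2p). *)

Section Schedules.

Variable x : nat -> R.
Hypothesis x_pos : forall k, 0 < x k.

Lemma Ssum_le_mono j j' : (j <= j')%nat -> Ssum x j <= Ssum x j'.
Proof.
  induction 1 as [|j' _ IH]; [lra|].
  unfold Ssum in *; simpl; specialize (x_pos (S j')); lra.
Qed.

Lemma term_le_Ssum j : x j <= Ssum x j.
Proof.
  destruct j as [|j]; unfold Ssum; simpl; [lra|].
  assert (0 <= sum_f_R0 x j) by (apply cond_pos_sum; intros; left; auto).
  lra.
Qed.

Lemma Ssum_shift_le s j : sum_f_R0 (fun u => x (u + s)) j <= Ssum x (j + s).
Proof.
  induction j as [|j IH]; simpl; [apply term_le_Ssum|].
  unfold Ssum in *; simpl; lra.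
Qed.

Lemma last_completed_upto T N : Ssum x 0 <= T ->
  exists J, (J <= N)%nat /\ Ssum x J <= T /\
    forall k, (k <= N)%nat -> Ssum x k <= T -> (k <= J)%nat.
Proof.
  intros H0; induction N as [|N IH].
  - exists 0%nat; repeat split; auto; intros; lia.
  - destruct IH as [J [H1 [H2 H3]]].
    destruct (Rle_dec (Ssum x (S N)) T) as [Hc|Hc].
    + exists (S N); repeat split; auto; intros; lia.
    + exists J; split; [lia|split; auto].
      intros k Hk Hs; destruct (Nat.eq_dec k (S N)); [subst; lra|].
      apply H3; auto; lia.
Qed.

Lemma ell_attained T : (forall a b, (a <= b)%nat -> x a <= x b) ->
  Ssum x 0 <= T -> (exists j0, T < Ssum x j0) ->
  exists j, Ssum x j <= T /\ ell x T = x j /\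
    (forall k, Ssum x k <= T -> x k <= ell x T).
Proof.
  intros Hmono H0 [j0 Hj0].
  assert (Hspec : ell_spec x T (ell x T)).
  { unfold ell; apply epsilon_spec.
    destruct (last_completed_upto T j0 H0) as [J [_ [H2 H3]]].
    exists (x J); left; exists J; repeat split; auto.
    intros k Hk; apply Hmono, H3; auto.
    destruct (Compare_dec.le_lt_dec k j0) as [|Hlt]; auto.
    pose proof (Ssum_le_mono j0 k ltac:(lia)); lra. }
  destruct Hspec as [[j [A [B C]]] | [A _]]; [exists j; auto|].
  specialize (A 0%nat); lra.
Qed.

End Schedules.

Lemma geometric_sum c D j :
  sum_f_R0 (fun u => c * D ^ u) j * (D - 1) = c * (D ^ S j - 1).
Proof.
  induction j as [|j IH]; simpl; [ring|].
  rewrite Rmult_plus_distr_r, IH; simpl; ring.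
Qed.

Definition geo (q : R) (n i : nat) : nat -> R := fun j => q ^ (j * n + i).

Section Geometric.

Variables (q : R) (n : nat).
Hypothesis q_gt1 : 1 < q.
Hypothesis n_pos : (1 <= n)%nat.

Lemma geo_pos i j : 0 < geo q n i j.
Proof. unfold geo; apply pow_lt; lra. Qed.

Lemma pow_le_exp a b : (a <= b)%nat -> q ^ a <= q ^ b.
Proof. intros Hab; apply Rle_pow; [lra|exact Hab]. Qed.

Lemma base_gt1 : 1 < q ^ n.
Proof. apply Rlt_pow_R1; [exact q_gt1|lia]. Qed.

Lemma geo_split i j : geo q n i j = q ^ i * (q ^ n) ^ j.
Proof. unfold geo; rewrite pow_add, Nat.mul_comm, pow_mult; ring. Qed.

Lemma geo_Ssum i j : Ssum (geo q n i) j * (q ^ n - 1) = q ^ i * ((q ^ n) ^ S j - 1).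
Proof.
  rewrite <- geometric_sum; unfold Ssum; f_equal.
  apply sum_eq; intros; apply geo_split.
Qed.

Lemma geo_Ssum_lt i j : Ssum (geo q n i) j * (q ^ n - 1) < q ^ (j * n + i + n).
Proof.
  rewrite geo_Ssum, <- pow_mult.
  replace (j * n + i + n)%nat with (i + n * S j)%nat by lia.
  rewrite pow_add; assert (0 < q ^ i) by (apply pow_lt; lra); nra.
Qed.

Lemma geo_Ssum_cross i j i' j' : (i' < n)%nat -> (j * n + i <= j' * n + i')%nat ->
  Ssum (geo q n i) j <= Ssum (geo q n i') j'.
Proof.
  intros Hi' Hle.
  assert (Hj : (j <= j')%nat) by nia.
  replace j' with (j + (j' - j))%nat by lia.
  eapply Rle_trans; [|apply Ssum_shift_le; intros; apply geo_pos].
  unfold Ssum; apply sum_Rle; intros u Hu; unfold geo.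
  apply pow_le_exp; nia.
Qed.

Lemma geo_ell i T : q ^ i <= T ->
  exists j, Ssum (geo q n i) j <= T /\ ell (geo q n i) T = q ^ (j * n + i) /\
    (forall k, Ssum (geo q n i) k <= T -> q ^ (k * n + i) <= ell (geo q n i) T).
Proof.
  intros HT; apply ell_attained.
  - apply geo_pos.
  - intros a b Hab; unfold geo; apply pow_le_exp; nia.
  - unfold Ssum, geo; simpl; lra.
  - destruct (Pow_x_infinity q) with (b := T + 1) as [N HN];
      [rewrite Rabs_right; lra|].
    exists N; specialize (HN N (le_n _)).
    rewrite Rabs_right in HN by (left; apply pow_lt; lra).
    pose proof (term_le_Ssum _ (geo_pos i) N).
    assert (q ^ N <= geo q n i N) by (unfold geo; apply pow_le_exp; nia).
    fold (geo q n i); lra.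
Qed.

Lemma geo_ell_ge i j T : Ssum (geo q n i) j <= T -> q ^ (j * n + i) <= ell (geo q n i) T.
Proof.
  intros Hj.
  assert (q ^ i <= T).
  { pose proof (Ssum_le_mono _ (geo_pos i) 0 j ltac:(lia)).
    unfold Ssum, geo in *; simpl in *; lra. }
  destruct (geo_ell i T) as [_ [_ [_ Hge]]]; auto.
Qed.

Lemma exponent_decomp g : exists j i, (i < n)%nat /\ g = (j * n + i)%nat.
Proof.
  exists (g / n)%nat, (g mod n)%nat; split.
  - apply Nat.mod_upper_bound; lia.
  - rewrite Nat.mul_comm; apply Nat.div_mod; lia.
Qed.

(* If X_l has the best contract at T, of exponent g, then the contract of
   exponent g+1 is not finished, whence T (d - 1) < q^(g+1+n). *)
Lemma geo_next_incomplete T l js : (l < n)%nat ->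
  (forall i, (i < n)%nat -> ell (geo q n i) T <= ell (geo q n l) T) ->
  ell (geo q n l) T = q ^ (js * n + l) ->
  T * (q ^ n - 1) < q ^ (js * n + l + 1 + n).
Proof.
  intros Hl Hbest Hg.
  destruct (exponent_decomp (js * n + l + 1)) as [j [i [Hi Hdec]]].
  destruct (Rle_dec (Ssum (geo q n i) j) T) as [Hc|Hc].
  - exfalso.
    pose proof (geo_ell_ge i j T Hc) as Hge; rewrite <- Hdec in Hge.
    specialize (Hbest i Hi); rewrite Hg in Hbest.
    rewrite Nat.add_1_r in Hge; simpl in Hge.
    assert (0 < q ^ (js * n + l)) by (apply pow_lt; lra); nra.
  - assert (Hdn : 0 < q ^ n - 1).
    { pose proof base_gt1; lra. }
    pose proof (geo_Ssum_lt i j); rewrite Hdec.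
    apply Rnot_le_lt in Hc.
    apply Rlt_trans with (Ssum (geo q n i) j * (q ^ n - 1)); [|auto].
    apply Rmult_lt_compat_r; auto.
Qed.

Section Interruption.

Variable T : R.
Hypothesis T_ge : 1 + q ^ n <= T.

Lemma geo_completed_upto_n i j : (i < n)%nat -> (j * n + i <= n)%nat ->
  Ssum (geo q n i) j <= T.
Proof.
  intros Hi Hle.
  assert (Ssum (geo q n 0) 1 = 1 + q ^ n)
    by (unfold Ssum, geo; simpl; rewrite !Nat.add_0_r; reflexivity).
  pose proof (geo_Ssum_cross i j 0 1 ltac:(lia) ltac:(lia)); lra.
Qed.

Lemma geo_completed_below l js i j : (l < n)%nat -> (i < n)%nat ->
  Ssum (geo q n l) js <= T ->
  (j * n + i <= js * n + l \/ j * n + i <= n)%nat ->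
  Ssum (geo q n i) j <= T.
Proof.
  intros Hl Hi Hjs [Hle|Hle].
  - pose proof (geo_Ssum_cross i j l js Hl Hle); lra.
  - apply geo_completed_upto_n; auto.
Qed.

End Interruption.

Lemma geo_robust r i : (q ^ n) ^ 2 <= r * (q ^ n - 1) -> robustness_le (geo q n i) r.
Proof.
  intros Hr j Hj; destruct j as [|j]; [lia|].
  replace (S j - 1)%nat with j by lia.
  set (d := q ^ n) in *.
  assert (Hd : 1 < d) by (apply base_gt1).
  assert (Hqi : 0 < q ^ i) by (apply pow_lt; lra).
  assert (Hdj : 0 < d ^ j) by (apply pow_lt; lra).
  pose proof (geo_pos i j) as Hx.
  apply Rmult_le_reg_r with (geo q n i j); auto.
  unfold Rdiv; rewrite Rmult_assoc, Rinv_l, Rmult_1_r by lra.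
  apply Rmult_le_reg_r with (d - 1); [lra|].
  rewrite geo_Ssum, geo_split; fold d.
  replace (d ^ S (S j)) with (d ^ j * d ^ 2) by (simpl; ring).
  assert (q ^ i * d ^ j * d ^ 2 <= q ^ i * d ^ j * (r * (d - 1)))
    by (apply Rmult_le_compat_l; [nra|lra]).
  nra.
Qed.

End Geometric.

(* The choice of d: it exceeds 1 and satisfies d^2 <= r (d - 1); for d = b_r
   this is an equality, for d = 1 + K it is the case hypothesis. *)
Lemma dval_spec r n p : 4 <= r -> (1 <= n)%nat -> 0 <= p ->
  1 < dval r n p /\ dval r n p ^ 2 <= r * (dval r n p - 1).
Proof.
  intros Hr Hn Hp; unfold dval, Kval.
  assert (Hn' : 1 <= INR n) by (apply (le_INR 1); auto).
  set (K := (2 * p * INR n + 1) / INR n).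
  assert (HK : 0 < K) by (unfold K; apply Rdiv_lt_0_compat; nra).
  destruct (Rle_dec r ((1 + K) ^ 2 / K)) as [Hle|Hgt].
  - unfold b_r; assert (Hdisc : 0 <= r ^ 2 - 4 * r) by nra.
    pose proof (sqrt_pos (r ^ 2 - 4 * r)); pose proof (sqrt_sqrt _ Hdisc).
    set (s := sqrt (r ^ 2 - 4 * r)) in *; split; nra.
  - apply Rnot_le_lt in Hgt; split; [lra|].
    assert (Hmul : (1 + K) ^ 2 / K * K < r * K) by (apply Rmult_lt_compat_r; auto).
    replace ((1 + K) ^ 2 / K * K) with ((1 + K) ^ 2) in Hmul by (field; lra).
    lra.
Qed.

Lemma Xsched_geo d n : 1 < d -> (1 <= n)%nat ->
  let q := Rpower d (1 / INR n) in
  1 < q /\ q ^ n = d /\ (forall i, Xsched d n i = geo q n i).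
Proof.
  intros Hd Hn q.
  assert (Hn' : 1 <= INR n) by (apply (le_INR 1); auto).
  split; [|split].
  - unfold q; rewrite <- (Rpower_O d) at 1 by lra.
    apply Rpower_lt; [lra|]; apply Rdiv_lt_0_compat; lra.
  - rewrite <- Rpower_pow by (unfold q; apply exp_pos).
    unfold q; rewrite Rpower_mult.
    replace (1 / INR n * INR n) with 1 by (field; lra); apply Rpower_1; lra.
  - intros i; apply functional_extensionality; intros j; unfold Xsched, geo.
    rewrite <- Rpower_pow by (unfold q; apply exp_pos).
    unfold q; rewrite Rpower_mult; f_equal.
    rewrite plus_INR, mult_INR; field; lra.
Qed.

Lemma count_mismatch (f g : nat -> bool) L :
  let E := length (filter (fun i => negb (Bool.eqb (f i) (g i))) L) in
  (length (filter f L) <= length (filter g L) + E)%nat /\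
  (length (filter g L) <= length (filter f L) + E)%nat.
Proof.
  induction L as [|a L IH]; simpl in *; [lia|].
  destruct (f a), (g a); simpl; lia.
Qed.

Lemma count_true_no l n : (l < n)%nat ->
  length (filter (fun i => Nat.leb i l) (seq 0 n)) = S l.
Proof.
  intros Hl; enough (forall n', length (filter (fun i => Nat.leb i l) (seq 0 n'))
    = Nat.min n' (S l)) as H by (rewrite H; lia).
  induction n' as [|n' IH]; [reflexivity|].
  rewrite seq_S, filter_app, length_app, IH; simpl.
  destruct (Nat.leb n' l) eqn:E; simpl.
  - apply Nat.leb_le in E; lia.
  - apply Nat.leb_gt in E; lia.
Qed.

Lemma num_no_near n l pred : (l < n)%nat ->
  (num_no n pred <= S l + num_errors n l pred)%nat /\
  (S l <= num_no n pred + num_errors n l pred)%nat.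
Proof.
  intros Hl; unfold num_no, num_errors.
  destruct (count_mismatch pred (fun i => Nat.leb i l) (seq 0 n)) as [C1 C2].
  rewrite count_true_no in C1, C2 by exact Hl; lia.
Qed.

Definition cyclically_below (n w l m : nat) : Prop :=
  ((m <= l)%nat /\ (l - m <= w)%nat) \/ ((l < m)%nat /\ (l + n - m <= w)%nat).

Lemma robust_index_near n k l pred : (l < n)%nat ->
  (num_errors n l pred <= k)%nat -> (2 * k <= n)%nat ->
  (robust_index n k pred < n)%nat /\
  cyclically_below n (2 * k) l (robust_index n k pred).
Proof.
  intros Hl HE Hk; destruct (num_no_near n l pred Hl) as [H1 H2].
  unfold robust_index, cyclically_below.
  set (s := (Z.of_nat (num_no n pred) - 1 - Z.of_nat k)%Z).
  destruct (Z_le_gt_dec 0 s).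
  - rewrite Z.mod_small by (unfold s; lia); unfold s; lia.
  - replace s with (s + Z.of_nat n + (-1) * Z.of_nat n)%Z by ring.
    rewrite Z.mod_add by lia.
    rewrite Z.mod_small by (unfold s in *; lia); unfold s in *; lia.
Qed.

Lemma exponent_near n w l m js : (m < n)%nat -> cyclically_below n w l m ->
  exists jm, (jm * n + m <= js * n + l \/ jm * n + m <= n)%nat /\
             (js * n + l <= jm * n + m + w)%nat.
Proof.
  intros Hm [[C1 C2]|[C1 C2]].
  - exists js; split; [left|]; lia.
  - destruct js as [|j].
    + exists 0%nat; simpl; split; [right|]; lia.
    + exists j; simpl; split; [left|]; lia.
Qed.

Lemma geo_competitive q n T l m w : 1 < q -> (1 <= n)%nat -> 1 + q ^ n <= T ->
  (l < n)%nat -> (m < n)%nat ->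
  (forall i, (i < n)%nat -> ell (geo q n i) T <= ell (geo q n l) T) ->
  cyclically_below n w l m ->
  T / ell (geo q n m) T <= q ^ (n + 1 + w) / (q ^ n - 1).
Proof.
  intros Hq Hn HT Hl Hm Hbest Hnear.
  assert (Hdn : 0 < q ^ n - 1) by (pose proof (base_gt1 q n Hq Hn); lra).
  assert (Hql : q ^ l <= T)
    by (pose proof (pow_le_exp q Hq l n ltac:(lia)); pose proof (base_gt1 q n Hq Hn); lra).
  destruct (geo_ell q n Hq Hn l T Hql) as [js [Hjs [Hg _]]].
  pose proof (geo_next_incomplete q n Hq Hn T l js Hl Hbest Hg) as Hnext.
  destruct (exponent_near n w l m js Hm Hnear) as [jm [Hbelow Hgap]].
  assert (Hell : q ^ (jm * n + m) <= ell (geo q n m) T).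
  { apply geo_ell_ge; auto.
    apply (geo_completed_below q n Hq Hn T HT l js); auto. }
  assert (Hpos : 0 < q ^ (jm * n + m)) by (apply pow_lt; lra).
  assert (Hexp : q ^ (js * n + l + 1 + n) <= q ^ (jm * n + m) * q ^ (n + 1 + w)).
  { rewrite <- pow_add; apply pow_le_exp; [exact Hq|lia]. }
  apply Rmult_le_reg_r with (ell (geo q n m) T * (q ^ n - 1)); [nra|].
  replace (T / ell (geo q n m) T * (ell (geo q n m) T * (q ^ n - 1)))
    with (T * (q ^ n - 1)) by (field; lra).
  replace (q ^ (n + 1 + w) / (q ^ n - 1) * (ell (geo q n m) T * (q ^ n - 1)))
    with (q ^ (n + 1 + w) * ell (geo q n m) T) by (field; lra).
  assert (0 < q ^ (n + 1 + w)) by (apply pow_lt; lra).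
  nra.
Qed.

Theorem theorem4 (r : R) (n : nat) (p : R) (k : nat) :
  4 <= r -> (1 <= n)%nat -> 0 <= p <= 1 / 2 -> p * INR n = INR k ->
  (forall i : nat, (i < n)%nat -> robustness_le (Xsched (dval r n p) n i) r) /\
  (forall (T : R) (l : nat) (pred : nat -> bool) (eta : R),
     1 + dval r n p <= T ->
     (l < n)%nat ->
     (forall i : nat, (i < n)%nat ->
        ell (Xsched (dval r n p) n i) T <= ell (Xsched (dval r n p) n l) T) ->
     0 <= eta <= p ->
     INR (num_errors n l pred) <= eta * INR n ->
     T / ell (Xsched (dval r n p) n (robust_index n k pred)) T
       <= Rpower (dval r n p) (1 + 1 / INR n + 2 * p) / (dval r n p - 1)).
Proof.
  intros Hr Hn Hp Hk.
  destruct (dval_spec r n p Hr Hn (proj1 Hp)) as [Hd Hd2].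
  set (d := dval r n p) in *.
  destruct (Xsched_geo d n Hd Hn) as [Hq [Hqn HX]].
  set (q := Rpower d (1 / INR n)) in *.
  assert (Hn' : 1 <= INR n) by (apply (le_INR 1); auto).
  split.
  - intros i _; rewrite HX; apply geo_robust; auto; rewrite Hqn; auto.
  - intros T l pred eta HT Hl Hbest Heta Herr.
    assert (HE : (num_errors n l pred <= k)%nat).
    { apply INR_le; rewrite <- Hk.
      assert (eta * INR n <= p * INR n) by (apply Rmult_le_compat_r; lra); lra. }
    assert (H2k : (2 * k <= n)%nat).
    { apply INR_le; rewrite mult_INR, <- Hk; simpl; nra. }
    destruct (robust_index_near n k l pred Hl HE H2k) as [Hm Hnear].
    assert (Hpow : Rpower d (1 + 1 / INR n + 2 * p) = q ^ (n + 1 + 2 * k)).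
    { rewrite <- Rpower_pow by (unfold q; apply exp_pos).
      unfold q; rewrite Rpower_mult; f_equal.
      rewrite !plus_INR, mult_INR, <- Hk; simpl; field; lra. }
    rewrite HX, Hpow, <- Hqn.
    rewrite <- Hqn in HT; setoid_rewrite HX in Hbest.
    apply geo_competitive with l; auto.
Qed.
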